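(* Let $p,q,r>0$ with $p+q+r=1$ and $q>p$, and consider the Markov chain on $\{0,1,2,\dots\}$ with $P(0,1)=1$ and, for $n\ge1$, $P(n,n-1)=q$, $P(n,n)=r$, $P(n,n+1)=p$, started at $X_0=0$; let $\mu_t$ be the distribution of $X_t$ and $\nu$ the stationary distribution. Let $$A=\frac{(1+q-p)(q+r)-q}{(1+q-p)(1-2p)},\qquad B=\frac{\frac{p}{q+r}\left(1+\frac{1}{\sqrt{pq}-p}\right)}{\left(1-\sqrt{\frac{p}{q}}\frac{r+(1+q-p)}{2(q+r)}\right)\left(1+\sqrt{\frac{p}{q}}\frac{r-(1+q-p)}{2(q+r)}\right)}.$$ If $\frac{q}{q+r}>r+2\sqrt{pq}$, then for all sufficiently large $t$, $$\|\nu-\mu_t\|_{TV}\ge A\left(\frac{q}{q+r}\right)^t - B\left(r+2\sqrt{pq}\right)^t.$$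
   Context: The stationary distribution is $\nu=\pi/\rho$ where $\pi_0=1$, $\pi_n=p^{n-1}/q^n$ ($n\ge1$) and $\rho=\sum_n\pi_n$. Total variation distance: $\|\nu-\mu\|_{TV}=\frac12\sum_{x}|\nu(x)-\mu(x)|$. *)

From Stdlib Require Import Reals Lra.
From Coquelicot Require Import Coquelicot.
Open Scope R_scope.

Definition trans (p q r : R) (m n : nat) : R :=
  match m with
  | O => if Nat.eqb n 1 then 1 else 0
  | S k => if Nat.eqb n k then q
           else if Nat.eqb n m then r
           else if Nat.eqb n (S m) then p
           else 0
  end.

(* Distribution of X_t started from X_0 = 0:
   mu_{t+1}(n) = sum_m mu_t(m) P(m,n).  Since P(m,n)=0 for m > n+1,
   the sum over m ranges over 0..n+1 exactly. *)
Fixpoint mu (p q r : R) (t : nat) (n : nat) : R :=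
  match t with
  | O => if Nat.eqb n 0 then 1 else 0
  | S t' => sum_f_R0 (fun m => mu p q r t' m * trans p q r m n) (S n)
  end.

Definition pi_st (p q : R) (n : nat) : R :=
  match n with
  | O => 1
  | S k => p ^ k / q ^ n
  end.

Definition rho (p q : R) : R := Series (pi_st p q).

Definition nu (p q : R) (n : nat) : R := pi_st p q n / rho p q.

Definition tv_dist (f g : nat -> R) : R :=
  / 2 * Series (fun x => Rabs (f x - g x)).

Definition constA (p q r : R) : R :=
  ((1 + q - p) * (q + r) - q) / ((1 + q - p) * (1 - 2 * p)).

Definition constB (p q r : R) : R :=
  (p / (q + r) * (1 + 1 / (sqrt (p * q) - p))) /
  ((1 - sqrt (p / q) * (r + (1 + q - p)) / (2 * (q + r))) *
   (1 + sqrt (p / q) * (r - (1 + q - p)) / (2 * (q + r)))).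

(* The chain is reversible, so its transition operator P is self-adjoint on L^2(nu) and
   mu_t = nu * P^t (delta_0 / nu_0).  Testing nu - mu_t against sgn n = (-1)^n gives
   2 TV >= |<sgn, 1> - (P^t sgn)(0)|.  Split sgn into a constant, a multiple of the
   eigenfunction (-alpha)^n with eigenvalue -alpha = -q/(q+r), and a remainder h orthogonal
   to both.  On that orthogonal complement the quadratic form of P is bounded by
   beta = r + 2 sqrt(pq): for functions vanishing at 0 by AM-GM on the edges of the chain,
   in general by subtracting u(0) times either eigenfunction, which is where alpha > beta is
   used.  Polarization then gives |P u| <= beta |u| there, so (P^t h)(0) = O(beta^t), while
   the eigenfunction contributes exactly 2 A (-alpha)^t. *)

From Stdlib Require Import Reals Lra Psatz Lia.
From Coquelicot Require Import Coquelicot.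
Open Scope R_scope.

Lemma ex_series_Rplus (a b : nat -> R) :
  ex_series a -> ex_series b -> ex_series (fun n => a n + b n).
Proof. exact (@ex_series_plus R_AbsRing R_NormedModule a b). Qed.

Lemma ex_series_Rscal (c : R) (a : nat -> R) :
  ex_series a -> ex_series (fun n => c * a n).
Proof. exact (@ex_series_scal_l R_AbsRing R_NormedModule c a). Qed.

Lemma is_series_Rscal (c : R) (a : nat -> R) (l : R) :
  is_series a l -> is_series (fun n => c * a n) (c * l).
Proof. exact (@is_series_scal_l R_AbsRing R_NormedModule c a l). Qed.

Lemma ex_series_Rext (a b : nat -> R) :
  (forall n, a n = b n) -> ex_series a -> ex_series b.
Proof. exact (@ex_series_ext R_AbsRing R_NormedModule a b). Qed.

Lemma ex_series_Rle (a b : nat -> R) :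
  (forall n, Rabs (a n) <= b n) -> ex_series b -> ex_series a.
Proof. exact (@ex_series_le R_AbsRing R_CompleteNormedModule a b). Qed.

Lemma is_series_Rext (a b : nat -> R) (l : R) :
  (forall n, a n = b n) -> is_series a l -> is_series b l.
Proof. exact (@is_series_ext R_AbsRing R_NormedModule a b l). Qed.

Lemma is_series_Rdecr (a : nat -> R) (l : R) :
  is_series (fun k => a (S k)) (l - a 0%nat) -> is_series a l.
Proof. exact (is_series_decr_1 a l). Qed.

Lemma Series_const0 : Series (fun _ => 0) = 0.
Proof. rewrite (Series_ext _ (fun _ => 0 * 0)) by (intro; ring). rewrite Series_scal_l. ring. Qed.

Lemma Series_ge_head (a : nat -> R) :
  ex_series a -> (forall n, 0 <= a n) -> a 0%nat <= Series a.
Proof.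
  intros Ha Hpos. rewrite (Series_incr_1 a Ha).
  assert (0 <= Series (fun k => a (S k))).
  { rewrite <- Series_const0. apply Series_le; [intro; split; auto; lra|].
    now apply ex_series_incr_1 in Ha. }
  lra.
Qed.

Lemma Series_abs_le (a b : nat -> R) :
  ex_series b -> (forall n, Rabs (a n) <= b n) -> Rabs (Series a) <= Series b.
Proof.
  intros Hb Hab. eapply Rle_trans.
  - apply Series_Rabs. apply (ex_series_Rle _ b); [|assumption].
    intro n. rewrite Rabs_Rabsolu. apply Hab.
  - apply Series_le; [|assumption]. intro n. split; [apply Rabs_pos | apply Hab].
Qed.

Definition bounded (u : nat -> R) : Prop := exists M, forall n, Rabs (u n) <= M.

Lemma bounded_const (c : R) : bounded (fun _ => c).
Proof. exists (Rabs c). intros; lra. Qed.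

Lemma bounded_lin (u v : nat -> R) (c : R) :
  bounded u -> bounded v -> bounded (fun n => u n + c * v n).
Proof.
  intros [M1 H1] [M2 H2]. exists (M1 + Rabs c * M2). intro n.
  eapply Rle_trans; [apply Rabs_triang|]. rewrite Rabs_mult.
  pose proof (H1 n). pose proof (H2 n). pose proof (Rabs_pos c). nra.
Qed.

Lemma bounded_shift (u : nat -> R) : bounded u -> bounded (fun n => u (S n)).
Proof. intros [M H]. exists M. auto. Qed.

Lemma ex_series_weighted (c w u v : nat -> R) :
  ex_series w -> (forall n, Rabs (c n) <= w n) -> bounded u -> bounded v ->
  ex_series (fun n => c n * u n * v n).
Proof.
  intros Hw Hc [M1 H1] [M2 H2].
  apply (ex_series_Rle _ (fun n => M1 * M2 * w n)); [|now apply ex_series_Rscal].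
  intro n. rewrite !Rabs_mult.
  pose proof (H1 n). pose proof (H2 n). pose proof (Hc n).
  pose proof (Rabs_pos (c n)). pose proof (Rabs_pos (u n)). pose proof (Rabs_pos (v n)).
  assert (Rabs (c n) * Rabs (u n) <= w n * M1) by (apply Rmult_le_compat; lra).
  assert (0 <= w n * M1) by nra.
  nra.
Qed.

Section WeightedInnerProduct.
Variable w : nat -> R.
Hypotheses (w_ge0 : forall n, 0 <= w n) (ex_w : ex_series w).

Definition wdot (u v : nat -> R) : R := Series (fun n => w n * u n * v n).

Lemma ex_wdot (u v : nat -> R) :
  bounded u -> bounded v -> ex_series (fun n => w n * u n * v n).
Proof.
  apply (ex_series_weighted w w); [assumption|]. intro n. rewrite Rabs_pos_eq; auto with real.
Qed.

Lemma wdot_ext (u u' v v' : nat -> R) :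
  (forall n, u n = u' n) -> (forall n, v n = v' n) -> wdot u v = wdot u' v'.
Proof. intros Eu Ev. apply Series_ext. intro n. now rewrite Eu, Ev. Qed.

Lemma wdot_sym (u v : nat -> R) : wdot u v = wdot v u.
Proof. apply Series_ext. intro n. ring. Qed.

Lemma wdotZr (c : R) (u v : nat -> R) : wdot u (fun n => c * v n) = c * wdot u v.
Proof. unfold wdot. rewrite <- Series_scal_l. apply Series_ext. intro; ring. Qed.

Lemma wdotDl (u v x : nat -> R) (c : R) : bounded u -> bounded v -> bounded x ->
  wdot (fun n => u n + c * v n) x = wdot u x + c * wdot v x.
Proof.
  intros Hu Hv Hx. unfold wdot.
  rewrite (Series_ext _ (fun n => w n * u n * x n + c * (w n * v n * x n))) by (intro; ring).
  rewrite Series_plus, Series_scal_l; auto using ex_wdot, ex_series_Rscal.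
Qed.

Lemma wdotDr (u v x : nat -> R) (c : R) : bounded u -> bounded v -> bounded x ->
  wdot x (fun n => u n + c * v n) = wdot x u + c * wdot x v.
Proof. intros. rewrite wdot_sym, wdotDl by assumption. now rewrite (wdot_sym u), (wdot_sym v). Qed.

Lemma wdot_expand (u1 u2 v1 v2 : nat -> R) (c e : R) :
  bounded u1 -> bounded u2 -> bounded v1 -> bounded v2 ->
  wdot (fun n => u1 n + c * u2 n) (fun n => v1 n + e * v2 n)
  = wdot u1 v1 + e * wdot u1 v2 + c * wdot u2 v1 + c * e * wdot u2 v2.
Proof.
  intros. rewrite wdotDl, !wdotDr by auto using bounded_lin. ring.
Qed.

Lemma wdot_ge0 (u : nat -> R) : bounded u -> 0 <= wdot u u.
Proof.
  intro Hu. rewrite <- Series_const0. apply Series_le; [|now apply ex_wdot].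
  intro n. pose proof (w_ge0 n). split; [lra|].
  replace (w n * u n * u n) with (w n * (u n * u n)) by ring.
  apply Rmult_le_pos; [lra | apply Rle_0_sqr].
Qed.

Lemma wdot_ge_head (u : nat -> R) : bounded u -> w 0%nat * (u 0%nat * u 0%nat) <= wdot u u.
Proof.
  intro Hu. rewrite <- Rmult_assoc. apply (Series_ge_head (fun n => w n * u n * u n)); [now apply ex_wdot|].
  intro n. pose proof (w_ge0 n).
  replace (w n * u n * u n) with (w n * (u n * u n)) by ring.
  apply Rmult_le_pos; [lra | apply Rle_0_sqr].
Qed.

Lemma wdot_orth_add (h k : nat -> R) (c : R) : bounded h -> bounded k -> wdot h k = 0 ->
  wdot (fun n => h n + c * k n) (fun n => h n + c * k n) = wdot h h + c * c * wdot k k.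
Proof.
  intros Hh Hk Hhk. rewrite wdot_expand by assumption. rewrite (wdot_sym k), Hhk. ring.
Qed.

Lemma wdot_incr_1 (u v : nat -> R) : bounded u -> bounded v ->
  wdot u v = w 0%nat * u 0%nat * v 0%nat + Series (fun n => w (S n) * u (S n) * v (S n)).
Proof. intros Hu Hv. unfold wdot. now rewrite Series_incr_1 by (apply ex_wdot; assumption). Qed.

End WeightedInnerProduct.

Lemma abs_mul_le_am_gm (F N M s x y : R) :
  0 <= N -> 0 <= M -> 0 <= s -> F * F <= s * s * (N * M) ->
  Rabs (F * x * y) <= s / 2 * (N * (x * x) + M * (y * y)).
Proof.
  intros HN HM Hs HF.
  set (L := Rabs (F * x * y)). set (U := s / 2 * (N * (x * x) + M * (y * y))).
  assert (HU : 0 <= U).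
  { unfold U. assert (0 <= N * (x * x)) by (apply Rmult_le_pos; nra).
    assert (0 <= M * (y * y)) by (apply Rmult_le_pos; nra). nra. }
  assert (HL : 0 <= L) by apply Rabs_pos.
  assert (HLL : L * L = F * F * ((x * y) * (x * y))).
  { unfold L. rewrite <- Rabs_mult, Rabs_pos_eq by apply Rle_0_sqr. ring. }
  assert (HUU : s * s * (N * M) * ((x * y) * (x * y)) <= U * U).
  { unfold U. assert (0 <= s * s) by nra.
    assert (0 <= (N * (x * x) - M * (y * y)) * (N * (x * x) - M * (y * y))) by apply Rle_0_sqr.
    nra. }
  assert (L * L <= U * U).
  { rewrite HLL. assert (0 <= (x * y) * (x * y)) by apply Rle_0_sqr. nra. }
  nra.
Qed.

(* Read with X = <Pu,u>, U = |u|^2, V = |Pu|^2, Y = <P Pu, Pu> for a self-adjoint P: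
   the hypothesis is the quadratic-form bound along u + c Pu, used at c = 1/b and -1/b. *)
Lemma polarization_bound (b U V X Y : R) : 0 < b ->
  (forall c, Rabs (X + 2 * c * V + c * c * Y) <= b * (U + 2 * c * X + c * c * V)) ->
  V <= b ^ 2 * U.
Proof.
  intros Hb H.
  set (t := / b). assert (Ht : t * b = 1) by (unfold t; field; lra).
  pose proof (proj1 (Rabs_le_between _ _) (H t)) as Hp.
  pose proof (proj1 (Rabs_le_between _ _) (H (- t))) as Hm.
  assert (H4 : 4 * t * V <= b * (2 * U + 2 * t * t * V)) by nra.
  assert (H5 := Rmult_le_compat_l b _ _ (Rlt_le _ _ Hb) H4).
  replace (b * (4 * t * V)) with (4 * V * (t * b)) in H5 by ring.
  replace (b * (b * (2 * U + 2 * t * t * V)))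
    with (2 * b * b * U + 2 * V * (t * b) * (t * b)) in H5 by ring.
  rewrite Ht in H5. simpl. nra.
Qed.

Lemma Rdiv_le_cross (a b c d : R) : 0 < b -> 0 < d -> a * d <= c * b -> a / b <= c / d.
Proof.
  intros Hb Hd H. apply (Rmult_le_reg_r (b * d)); [nra|].
  replace (a / b * (b * d)) with (a * d) by (field; lra).
  replace (c / d * (b * d)) with (c * b) by (field; lra). exact H.
Qed.

Lemma r_le_q_of_gap (p q r : R) :
  0 < p -> 0 < q -> 0 < r -> p + q + r = 1 -> p < q ->
  q / (q + r) > r + 2 * sqrt (p * q) -> r <= q.
Proof.
  intros hp hq hr hs hqp hgap.
  assert (Hsq : p <= sqrt (p * q)).
  { rewrite <- (sqrt_square p) at 1 by lra. apply sqrt_le_1; nra. }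
  assert (H : q > (r + 2 * p) * (q + r)).
  { apply (Rmult_gt_compat_r (q + r)) in hgap; [|lra].
    unfold Rdiv in hgap. rewrite Rmult_assoc, Rinv_l in hgap by lra. nra. }
  nra.
Qed.

Lemma sqrt_ratio_lt1 (p q : R) : 0 < p -> p < q ->
  let s := sqrt (p / q) in 0 < s < 1 /\ p = q * s * s /\ sqrt (p * q) = q * s.
Proof.
  intros hp hqp s.
  assert (Hpq : 0 < p / q) by (apply Rdiv_lt_0_compat; lra).
  assert (Hss : s * s = p / q) by (apply sqrt_sqrt; lra).
  assert (Hs0 : 0 < s) by (apply sqrt_lt_R0; lra).
  assert (Hp : p = q * s * s) by (rewrite Rmult_assoc, Hss; field; lra).
  assert (s * s < 1).
  { rewrite Hss. apply (Rmult_lt_reg_r q); [lra|]. unfold Rdiv. rewrite Rmult_assoc, Rinv_l; lra. }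
  repeat split; [lra | nra | exact Hp |].
  rewrite <- (sqrt_Rsqr (q * s)) by nra. f_equal. unfold Rsqr. rewrite Hp. ring.
Qed.

Lemma constB_eq (p q r s : R) : 0 < q -> 0 < r -> p + q + r = 1 ->
  0 < s < 1 -> p = q * s * s -> sqrt (p * q) = q * s -> sqrt (p / q) = s ->
  constB p q r = s * (q * s * (1 - s) + 1) / ((1 - s) * (1 - s) * (q + r - s * q)).
Proof.
  intros hq hr hsum [hs0 hs1] Hp Hpq Hs. unfold constB. rewrite Hpq, Hs.
  replace (r + (1 + q - p)) with (2 * (q + r)) by lra.
  replace (r - (1 + q - p)) with (- 2 * q) by lra.
  replace (q * s - p) with (q * s * (1 - s)) by (rewrite Hp; ring).
  rewrite Hp. field. repeat split; nra.
Qed.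

(* Used with p = q s^2 and u = q + r; the core inequality (1-s)^4 u^4 <= q (1-s^2) (q+u)^2
   is where r <= q, i.e. u <= 2q, enters. *)
Lemma tail_ratio_le_sq (q u s : R) : 0 < q -> 0 < s < 1 -> q <= u <= 1 -> u <= 2 * q ->
  q * s * s / (q * (q - q * s * s) * (1 + q / u) ^ 2) <= (s / ((1 - s) ^ 2 * u)) ^ 2.
Proof.
  intros hq [hs0 hs1] [hqu hu1] hu2.
  assert (Hu4 : u * u * u * u <= q * ((q + u) * (q + u))).
  { assert (0 <= u * u * u) by (apply Rmult_le_pos; nra).
    assert ((q + u) * (q + u) >= 9 / 4 * (u * u)) by nra.
    nra. }
  assert (Hs4 : (1 - s) ^ 2 * (1 - s) ^ 2 <= 1 - s * s).
  { assert (0 <= (1 - s) ^ 2 <= 1 - s) by (simpl; split; nra). nra. }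
  replace (q * s * s / (q * (q - q * s * s) * (1 + q / u) ^ 2))
    with (s * s * (u * u) / (q * (1 - s * s) * ((q + u) * (q + u)))) by (field; nra).
  replace ((s / ((1 - s) ^ 2 * u)) ^ 2)
    with (s * s / ((1 - s) ^ 2 * (1 - s) ^ 2 * (u * u))) by (field; nra).
  assert (H1s : 0 < (1 - s) ^ 2) by (apply pow_lt; lra).
  apply Rdiv_le_cross; [apply Rmult_lt_0_compat; nra | apply Rmult_lt_0_compat; nra |].
  assert (Hcore : (1 - s) ^ 2 * (1 - s) ^ 2 * (u * u * u * u)
                  <= (1 - s * s) * (q * ((q + u) * (q + u)))) by (apply Rmult_le_compat; nra).
  apply (Rmult_le_compat_l (s * s)) in Hcore; [|nra].
  lra.
Qed.

(* The paper's constant B is not sharp: it dominates the constant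
   sqrt (p / (q (q - p))) / (1 + alpha) that the argument actually produces. *)
Lemma constB_sq_ge (p q r : R) : 0 < p -> 0 < q -> 0 < r -> p + q + r = 1 -> p < q ->
  q / (q + r) > r + 2 * sqrt (p * q) ->
  0 <= constB p q r /\ p / (q * (q - p) * (1 + q / (q + r)) ^ 2) <= constB p q r ^ 2.
Proof.
  intros hp hq hr hsum hqp hgap.
  pose proof (r_le_q_of_gap p q r hp hq hr hsum hqp hgap) as hrq.
  destruct (sqrt_ratio_lt1 p q hp hqp) as [Hs [Hp Hpq]].
  set (s := sqrt (p / q)) in *.
  rewrite (constB_eq p q r s) by auto.
  set (u := q + r) in *.
  pose proof Hs as [Hs0 Hs1].
  assert (Hu : 0 < u) by (unfold u; lra).
  assert (Hus : 0 < u - s * q) by (unfold u; nra).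
  assert (H1s : 0 < (1 - s) ^ 2) by (apply pow_lt; lra).
  assert (HB0 : 0 < s / ((1 - s) ^ 2 * u)) by (apply Rdiv_lt_0_compat; nra).
  assert (HB : s / ((1 - s) ^ 2 * u)
               <= s * (q * s * (1 - s) + 1) / ((1 - s) * (1 - s) * (u - s * q))).
  { assert (HK : 0 <= q * s * (1 - s)) by (apply Rmult_le_pos; nra).
    assert (Hd : (1 - s) * (1 - s) * (u - s * q) <= (1 - s) ^ 2 * u) by (simpl; nra).
    assert (Hd0 : 0 < (1 - s) * (1 - s) * (u - s * q)) by (apply Rmult_lt_0_compat; nra).
    apply Rdiv_le_cross; [nra | exact Hd0 |].
    set (Y := (1 - s) ^ 2 * u) in *. set (K := q * s * (1 - s)) in *.
    assert (0 <= s * Y * K) by (apply Rmult_le_pos; [apply Rmult_le_pos|]; unfold Y; nra).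
    apply (Rmult_le_compat_l s) in Hd; lra. }
  split; [lra|].
  rewrite Hp at 1. replace (q - p) with (q - q * s * s) by (rewrite Hp; ring).
  eapply Rle_trans; [apply tail_ratio_le_sq; unfold u; try split; lra|].
  apply pow_incr. lra.
Qed.

Definition trans_op (p q r : R) (u : nat -> R) (n : nat) : R :=
  match n with
  | O => u 1%nat
  | S k => q * u k + r * u (S k) + p * u (S (S k))
  end.

Fixpoint trans_iter (p q r : R) (t : nat) (u : nat -> R) : nat -> R :=
  match t with
  | O => u
  | S t' => trans_op p q r (trans_iter p q r t' u)
  end.

Section TransitionOperator.
Variables p q r : R.

Lemma trans_op_ext (u v : nat -> R) :
  (forall n, u n = v n) -> forall n, trans_op p q r u n = trans_op p q r v n.
Proof. intros E n. destruct n; simpl; now rewrite ?E. Qed.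

Lemma trans_op_lin (u v : nat -> R) (c : R) (n : nat) :
  trans_op p q r (fun m => u m + c * v m) n = trans_op p q r u n + c * trans_op p q r v n.
Proof. destruct n; simpl; ring. Qed.

Lemma trans_op_scal (u : nat -> R) (c : R) (n : nat) :
  trans_op p q r (fun m => c * u m) n = c * trans_op p q r u n.
Proof. destruct n; simpl; ring. Qed.

Lemma bounded_trans_op (u : nat -> R) : bounded u -> bounded (trans_op p q r u).
Proof.
  intros [M H]. exists (M * (1 + Rabs p + Rabs q + Rabs r)). intro n.
  assert (HM : 0 <= M) by (specialize (H 0%nat); pose proof (Rabs_pos (u 0%nat)); lra).
  pose proof (Rabs_pos p). pose proof (Rabs_pos q). pose proof (Rabs_pos r).
  destruct n as [|k]; simpl.
  - pose proof (H 1%nat). nra.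
  - eapply Rle_trans; [apply Rabs_triang|].
    eapply Rle_trans; [apply Rplus_le_compat_r, Rabs_triang|]. rewrite !Rabs_mult.
    pose proof (H k). pose proof (H (S k)). pose proof (H (S (S k))).
    assert (Rabs q * Rabs (u k) <= Rabs q * M) by (apply Rmult_le_compat_l; auto).
    assert (Rabs r * Rabs (u (S k)) <= Rabs r * M) by (apply Rmult_le_compat_l; auto).
    assert (Rabs p * Rabs (u (S (S k))) <= Rabs p * M) by (apply Rmult_le_compat_l; auto).
    nra.
Qed.

Lemma trans_iter_ext (t : nat) (u v : nat -> R) :
  (forall n, u n = v n) -> forall n, trans_iter p q r t u n = trans_iter p q r t v n.
Proof. intros E. induction t; intro n; simpl; auto. now apply trans_op_ext. Qed.

Lemma trans_iter_lin (t : nat) (u v : nat -> R) (c : R) (n : nat) :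
  trans_iter p q r t (fun m => u m + c * v m) n
  = trans_iter p q r t u n + c * trans_iter p q r t v n.
Proof.
  revert n; induction t; intro n; simpl; auto.
  rewrite (trans_op_ext _ (fun m => trans_iter p q r t u m + c * trans_iter p q r t v m) IHt).
  apply trans_op_lin.
Qed.

Lemma trans_iter_op_comm (t : nat) (u : nat -> R) (n : nat) :
  trans_iter p q r t (trans_op p q r u) n = trans_op p q r (trans_iter p q r t u) n.
Proof. revert n; induction t; intro n; simpl; auto. now apply trans_op_ext. Qed.

Lemma bounded_trans_iter (t : nat) (u : nat -> R) : bounded u -> bounded (trans_iter p q r t u).
Proof. intro H. induction t; simpl; auto using bounded_trans_op. Qed.

End TransitionOperator.

Ltac case_eqb := repeat match goal with
  |- context [Nat.eqb ?a ?b] => destruct (Nat.eqb_spec a b); try lia end.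

Lemma trans_zero_below (p q r : R) (m k : nat) : (m < k)%nat -> trans p q r m (S k) = 0.
Proof. intro H. destruct m; unfold trans; case_eqb; auto. Qed.

Lemma trans_up (p q r : R) (k : nat) :
  trans p q r k (S k) = match k with O => 1 | S _ => p end.
Proof. destruct k; unfold trans; case_eqb; auto. Qed.

Lemma trans_diag (p q r : R) (k : nat) : trans p q r (S k) (S k) = r.
Proof. unfold trans; case_eqb; auto. Qed.

Lemma trans_down (p q r : R) (k : nat) : trans p q r (S k) k = q.
Proof. unfold trans; case_eqb; auto. Qed.

Lemma mu_succ_0 (p q r : R) (t : nat) : mu p q r (S t) 0 = mu p q r t 1 * q.
Proof. simpl. unfold trans; simpl. ring. Qed.

Lemma mu_succ_S (p q r : R) (t k : nat) : mu p q r (S t) (S k) =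
  mu p q r t k * trans p q r k (S k) + mu p q r t (S k) * r + mu p q r t (S (S k)) * q.
Proof.
  change (mu p q r (S t) (S k))
    with (sum_f_R0 (fun m => mu p q r t m * trans p q r m (S k)) (S (S k))).
  rewrite tech5, tech5, trans_diag, trans_down.
  destruct k as [|k]; [simpl; ring|].
  rewrite tech5, sum_eq_R0; [ring|].
  intros m Hm. rewrite trans_zero_below by lia. ring.
Qed.

Section Chain.
Variables p q r : R.
Hypotheses (hp : 0 < p) (hq : 0 < q) (hr : 0 < r) (hsum : p + q + r = 1) (hqp : p < q).

(* pi_n x^n = (x / q) (p x / q)^(n-1) for n >= 1: a geometric series. *)
Lemma pi_st_gen (x : R) : 0 <= x <= 1 ->
  is_series (fun n => pi_st p q n * x ^ n) (1 + x / (q - p * x)).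
Proof.
  intro Hx.
  assert (Hg : Rabs (p * x / q) < 1).
  { rewrite Rabs_pos_eq by (apply Rdiv_le_0_compat; nra).
    apply (Rmult_lt_reg_r q); [lra|]. unfold Rdiv. rewrite Rmult_assoc, Rinv_l; nra. }
  apply is_series_Rdecr.
  apply (is_series_Rext (fun k => x / q * (p * x / q) ^ k)).
  - intro k. simpl pi_st. unfold Rdiv. rewrite !Rpow_mult_distr, pow_inv.
    simpl. field. split; [apply pow_nonzero|]; lra.
  - replace (1 + x / (q - p * x) - pi_st p q 0 * x ^ 0) with (x / q * / (1 - p * x / q))
      by (simpl; field; nra).
    now apply is_series_Rscal, is_series_geom.
Qed.

Lemma rho_eq : rho p q = 1 + 1 / (q - p).
Proof.
  unfold rho. rewrite (Series_ext _ (fun n => pi_st p q n * 1 ^ n)) by (intro; rewrite pow1; ring).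
  rewrite (is_series_unique _ _ (pi_st_gen 1 ltac:(lra))). f_equal. field. lra.
Qed.

Lemma rho_pos : 0 < rho p q.
Proof. rewrite rho_eq. assert (0 < 1 / (q - p)) by (apply Rdiv_lt_0_compat; lra). lra. Qed.

Lemma nu_pos (n : nat) : 0 < nu p q n.
Proof.
  apply Rdiv_lt_0_compat; [|apply rho_pos].
  destruct n; simpl; [lra|].
  apply Rdiv_lt_0_compat; [apply pow_lt; lra | apply Rmult_lt_0_compat; [lra | apply pow_lt; lra]].
Qed.

Lemma nu_ge0 (n : nat) : 0 <= nu p q n.
Proof. apply Rlt_le, nu_pos. Qed.

Lemma nu_gen (x : R) : 0 <= x <= 1 ->
  is_series (fun n => nu p q n * x ^ n) ((1 + x / (q - p * x)) / rho p q).
Proof.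
  intro Hx. pose proof rho_pos.
  apply (is_series_Rext (fun n => / rho p q * (pi_st p q n * x ^ n))).
  - intro n. unfold nu. field. lra.
  - replace ((1 + x / (q - p * x)) / rho p q) with (/ rho p q * (1 + x / (q - p * x)))
      by (unfold Rdiv; ring).
    now apply is_series_Rscal, pi_st_gen.
Qed.

Lemma ex_nu : ex_series (nu p q).
Proof.
  eexists. apply (is_series_Rext (fun n => nu p q n * 1 ^ n)); [intro; rewrite pow1; ring|].
  apply nu_gen. lra.
Qed.

Lemma Series_nu : Series (nu p q) = 1.
Proof.
  rewrite (Series_ext _ (fun n => nu p q n * 1 ^ n)) by (intro; rewrite pow1; ring).
  rewrite (is_series_unique _ _ (nu_gen 1 ltac:(lra))), rho_eq. field. lra.
Qed.

Lemma nu_detailed_balance (k : nat) : nu p q (S k) * q = nu p q k * trans p q r k (S k).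
Proof.
  pose proof rho_pos. rewrite trans_up. unfold nu.
  destruct k; simpl; field; repeat split; try lra; apply pow_nonzero; lra.
Qed.

Local Notation dot := (wdot (nu p q)).
Local Notation P := (trans_op p q r).
Local Hint Resolve nu_ge0 ex_nu bounded_const bounded_trans_op : core.

Definition flow (n : nat) : R := nu p q n * trans p q r n (S n).

Definition edge_sum (u v : nat -> R) : R := Series (fun n => flow n * u (S n) * v n).

Lemma flow_bound (n : nat) : 0 <= flow n <= nu p q n.
Proof.
  unfold flow. rewrite trans_up. pose proof (nu_pos n).
  destruct n; split; nra.
Qed.

Lemma ex_nu_shift : ex_series (fun n => nu p q (S n)).
Proof. exact (proj1 (ex_series_incr_1 _) ex_nu). Qed.

Lemma ex_edge_sum (u v : nat -> R) :
  bounded u -> bounded v -> ex_series (fun n => flow n * u (S n) * v n).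
Proof.
  intros Hu Hv. apply (ex_series_weighted _ (nu p q)); auto using bounded_shift.
  intro n. pose proof (flow_bound n). rewrite Rabs_pos_eq; lra.
Qed.

(* Splitting <Pu,v> along the edges of the chain; the down-edges are turned into
   up-edges by detailed balance. *)
Lemma dot_trans_op (u v : nat -> R) : bounded u -> bounded v ->
  dot (P u) v = r * Series (fun n => nu p q (S n) * u (S n) * v (S n))
                + edge_sum u v + edge_sum v u.
Proof.
  intros Hu Hv. unfold wdot, edge_sum.
  assert (Hdiag : ex_series (fun n => nu p q (S n) * u (S n) * v (S n))).
  { apply (ex_series_weighted _ (fun n => nu p q (S n))); auto using bounded_shift, ex_nu_shift.
    intro n. rewrite Rabs_pos_eq; auto with real. }
  assert (Hup : ex_series (fun n => flow (S n) * u (S (S n)) * v (S n))).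
  { apply (ex_series_weighted _ (fun n => nu p q (S n))); auto using bounded_shift, ex_nu_shift.
    - intro n. pose proof (flow_bound (S n)). rewrite Rabs_pos_eq; lra.
    - apply (bounded_shift (fun n => u (S n))), bounded_shift, Hu. }
  rewrite Series_incr_1 by (apply ex_wdot; auto).
  rewrite (Series_incr_1 (fun n => flow n * u (S n) * v n)) by (now apply ex_edge_sum).
  rewrite (Series_ext _ (fun n => (r * (nu p q (S n) * u (S n) * v (S n))
                                   + flow n * v (S n) * u n) + flow (S n) * u (S (S n)) * v (S n))).
  - rewrite !Series_plus, Series_scal_l;
      auto using ex_series_Rplus, ex_series_Rscal, ex_edge_sum.
    replace (flow 0) with (nu p q 0) by (unfold flow; rewrite trans_up; ring).
    change (P u 0%nat) with (u 1%nat). ring.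
  - intro n. simpl trans_op. unfold flow.
    rewrite <- (nu_detailed_balance n), trans_up. ring.
Qed.

Lemma dot_trans_op_sym (u v : nat -> R) : bounded u -> bounded v -> dot (P u) v = dot u (P v).
Proof.
  intros Hu Hv. rewrite (wdot_sym _ u), !dot_trans_op by assumption.
  rewrite (Series_ext (fun n => nu p q (S n) * u (S n) * v (S n))
                      (fun n => nu p q (S n) * v (S n) * u (S n))) by (intro; ring).
  ring.
Qed.

Definition beta : R := r + 2 * sqrt (p * q).

Lemma sqrt_pq_sq : sqrt (p * q) * sqrt (p * q) = p * q.
Proof. apply sqrt_sqrt. nra. Qed.

(* For n >= 1 detailed balance gives flow_n^2 = pq nu_n nu_(n+1), so each edge term is
   bounded by weighted AM-GM; the edge at 0 drops out since u 0 = 0. *)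
Lemma edge_sum_abs_le (u : nat -> R) : bounded u -> u 0%nat = 0 ->
  Rabs (edge_sum u u) <= sqrt (p * q) * dot u u.
Proof.
  intros Hu H0. set (s := sqrt (p * q)).
  assert (Hs : 0 <= s) by apply sqrt_pos.
  set (Z := fun n => nu p q n * (u n * u n)).
  assert (HZ : ex_series Z).
  { apply (ex_series_Rext (fun n => nu p q n * u n * u n)); [intro; unfold Z; ring|].
    now apply ex_wdot. }
  assert (HZS : ex_series (fun n => Z (S n))) by exact (proj1 (ex_series_incr_1 _) HZ).
  assert (EZ : Series (fun n => s / 2 * (Z n + Z (S n))) = s * dot u u).
  { rewrite Series_scal_l, Series_plus by assumption.
    rewrite (wdot_incr_1 _ nu_ge0 ex_nu u u), H0 by assumption.
    rewrite (Series_incr_1 Z HZ). unfold Z at 1. rewrite H0.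
    rewrite (Series_ext (fun n => Z (S n)) (fun n => nu p q (S n) * u (S n) * u (S n)))
      by (intro; unfold Z; ring).
    unfold Z; field. }
  rewrite <- EZ. apply Series_abs_le.
  - apply ex_series_Rscal, ex_series_Rplus; assumption.
  - intros [|n]; unfold Z.
    + rewrite H0, Rmult_0_r, Rabs_R0, Rmult_0_l, Rmult_0_r, Rplus_0_l.
      apply Rmult_le_pos; [lra|]. apply Rmult_le_pos; [apply nu_ge0 | apply Rle_0_sqr].
    + unfold flow. rewrite trans_up.
      replace (nu p q (S n) * p * u (S (S n)) * u (S n))
        with (nu p q (S n) * p * u (S n) * u (S (S n))) by ring.
      apply abs_mul_le_am_gm; auto.
      pose proof (nu_detailed_balance (S n)) as Hdb. rewrite trans_up in Hdb.
      pose proof sqrt_pq_sq as Hss. fold s in Hss.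
      replace (s * s * (nu p q (S n) * nu p q (S (S n))))
        with (p * nu p q (S n) * (nu p q (S (S n)) * q)) by (rewrite Hss; ring).
      rewrite Hdb. nra.
Qed.

Lemma quad_form_head_zero (u : nat -> R) : bounded u -> u 0%nat = 0 ->
  Rabs (dot (P u) u) <= beta * dot u u.
Proof.
  intros Hu H0. rewrite dot_trans_op by assumption.
  rewrite (wdot_incr_1 _ nu_ge0 ex_nu u u), H0 by assumption.
  replace (nu p q 0 * 0 * 0) with 0 by ring. rewrite Rplus_0_l.
  pose proof (edge_sum_abs_le u Hu H0) as HE.
  rewrite (wdot_incr_1 _ nu_ge0 ex_nu u u), H0 in HE by assumption.
  replace (nu p q 0 * 0 * 0) with 0 in HE by ring. rewrite Rplus_0_l in HE.
  set (U := Series (fun n => nu p q (S n) * u (S n) * u (S n))) in *.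
  assert (HU : 0 <= U).
  { pose proof (wdot_ge0 _ nu_ge0 ex_nu u Hu) as HU.
    rewrite (wdot_incr_1 _ nu_ge0 ex_nu u u), H0 in HU by assumption. fold U in HU. lra. }
  unfold beta. eapply Rle_trans; [apply Rabs_triang|].
  eapply Rle_trans; [apply Rplus_le_compat_r, Rabs_triang|].
  rewrite Rabs_mult, (Rabs_pos_eq r), (Rabs_pos_eq U) by lra. lra.
Qed.

Definition alpha : R := q / (q + r).

Definition alt (n : nat) : R := (- alpha) ^ n.

Lemma alpha_bounds : 0 < alpha < 1.
Proof.
  unfold alpha. split; [apply Rdiv_lt_0_compat; lra|].
  apply (Rmult_lt_reg_r (q + r)); [lra|]. unfold Rdiv. rewrite Rmult_assoc, Rinv_l; lra.
Qed.

Lemma bounded_alt : bounded alt.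
Proof.
  exists 1. intro n. unfold alt. rewrite <- RPow_abs, Rabs_Ropp.
  pose proof alpha_bounds. rewrite Rabs_pos_eq by lra.
  rewrite <- (pow1 n). apply pow_incr. lra.
Qed.

Local Hint Resolve bounded_alt : core.

Lemma trans_op_const (n : nat) : P (fun _ => 1) n = 1.
Proof. destruct n; simpl; lra. Qed.

Lemma trans_op_alt (n : nat) : P alt n = - alpha * alt n.
Proof.
  destruct n; unfold alt; simpl; [ring|].
  assert (E : q - r * alpha + p * (alpha * alpha) = alpha * alpha).
  { unfold alpha. replace p with (1 - q - r) by lra. field. lra. }
  transitivity ((q - r * alpha + p * (alpha * alpha)) * (- alpha) ^ n); [ring|].
  rewrite E. ring.
Qed.

Lemma dot_const_const : dot (fun _ => 1) (fun _ => 1) = 1.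
Proof. unfold wdot. rewrite (Series_ext _ (nu p q)) by (intro; ring). apply Series_nu. Qed.

Lemma dot_const_alt : dot (fun _ => 1) alt = 0.
Proof.
  pose proof (dot_trans_op_sym (fun _ => 1) alt (bounded_const 1) bounded_alt) as H.
  rewrite (wdot_ext _ _ (fun _ => 1) _ alt trans_op_const (fun n => eq_refl)) in H.
  rewrite (wdot_ext _ _ _ _ (fun n => - alpha * alt n) (fun n => eq_refl) trans_op_alt) in H.
  rewrite wdotZr in H. pose proof alpha_bounds. nra.
Qed.

Lemma quad_form_orth_eig (u e : nat -> R) (lam c : R) :
  bounded u -> bounded e -> (forall n, P e n = lam * e n) -> dot u e = 0 ->
  dot (P (fun n => u n + c * e n)) (fun n => u n + c * e n) = dot (P u) u + c * c * lam * dot e e.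
Proof.
  intros Hu He He_eig Hue.
  assert (HP : forall n, P (fun m => u m + c * e m) n = P u n + (c * lam) * e n).
  { intro n. rewrite trans_op_lin, He_eig. ring. }
  rewrite (wdot_ext _ _ _ _ (fun n => u n + c * e n) HP (fun n => eq_refl)).
  rewrite wdot_expand by auto.
  rewrite (dot_trans_op_sym u e) by assumption.
  rewrite (wdot_ext _ u u (P e) (fun n => lam * e n) (fun n => eq_refl) He_eig), wdotZr.
  rewrite (wdot_sym _ e u), Hue. ring.
Qed.

Definition perp_eig (u : nat -> R) : Prop :=
  bounded u /\ dot u (fun _ => 1) = 0 /\ dot u alt = 0.

Lemma perp_eig_trans_op (u : nat -> R) : perp_eig u -> perp_eig (P u).
Proof.
  intros [Hu [H1 Ha]]. split; [auto | split]; rewrite dot_trans_op_sym by auto.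
  - now rewrite (wdot_ext _ u u _ (fun _ => 1) (fun n => eq_refl) trans_op_const).
  - rewrite (wdot_ext _ u u _ _ (fun n => eq_refl) trans_op_alt), wdotZr, Ha. ring.
Qed.

Lemma perp_eig_lin (u v : nat -> R) (c : R) :
  perp_eig u -> perp_eig v -> perp_eig (fun n => u n + c * v n).
Proof.
  intros [Hu [Hu1 Hua]] [Hv [Hv1 Hva]]. split; [now apply bounded_lin|].
  rewrite !wdotDl by auto. rewrite Hu1, Hv1, Hua, Hva. split; ring.
Qed.

Lemma perp_eig_trans_iter (t : nat) (u : nat -> R) : perp_eig u -> perp_eig (trans_iter p q r t u).
Proof. intro H. induction t; simpl; auto using perp_eig_trans_op. Qed.

Hypothesis hgap : q / (q + r) > r + 2 * sqrt (p * q).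

Lemma beta_bounds : 0 < beta < alpha.
Proof. unfold beta, alpha. pose proof (sqrt_pos (p * q)). lra. Qed.

(* u - u(0) and u - u(0) alt vanish at 0; the eigenvalues 1 and -alpha < -beta shift the
   quadratic form in opposite directions, giving the upper and the lower bound. *)
Lemma quad_form_perp_eig (u : nat -> R) : perp_eig u -> Rabs (dot (P u) u) <= beta * dot u u.
Proof.
  intros [Hu [H1 Ha]]. pose proof beta_bounds. pose proof alpha_bounds.
  set (u0 := u 0%nat).
  assert (Hc : forall n, P (fun _ => 1) n = 1 * 1) by (intro; rewrite trans_op_const; ring).
  pose proof (quad_form_head_zero (fun n => u n + (- u0) * 1)
                (bounded_lin _ _ _ Hu (bounded_const 1)) ltac:(unfold u0; ring)) as Hy.
  rewrite (quad_form_orth_eig u (fun _ => 1) 1), (wdot_orth_add _ nu_ge0 ex_nu u (fun _ => 1)),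
    dot_const_const in Hy by auto.
  pose proof (quad_form_head_zero (fun n => u n + (- u0) * alt n)
                (bounded_lin _ _ _ Hu bounded_alt) ltac:(unfold u0, alt; simpl; ring)) as Hz.
  rewrite (quad_form_orth_eig u alt (- alpha)), (wdot_orth_add _ nu_ge0 ex_nu u alt) in Hz
    by auto using trans_op_alt.
  pose proof (wdot_ge0 _ nu_ge0 ex_nu alt bounded_alt) as HF.
  pose proof (wdot_ge0 _ nu_ge0 ex_nu u Hu) as HU.
  apply Rabs_le_between in Hy, Hz. apply Rabs_le_between.
  assert (0 <= u0 * u0) by apply Rle_0_sqr.
  assert (0 <= u0 * u0 * dot alt alt) by nra.
  split; nra.
Qed.

Lemma norm_trans_op_perp_eig (u : nat -> R) :
  perp_eig u -> dot (P u) (P u) <= beta ^ 2 * dot u u.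
Proof.
  intro Hperp. pose proof Hperp as [Hu _]. pose proof beta_bounds as [Hb _].
  apply (polarization_bound beta (dot u u) (dot (P u) (P u)) (dot (P u) u) (dot (P (P u)) (P u)) Hb).
  intro c.
  pose proof (quad_form_perp_eig _ (perp_eig_lin u (P u) c Hperp (perp_eig_trans_op u Hperp))) as H.
  rewrite (wdot_ext _ _ (fun n => P u n + c * P (P u) n) _ _ (trans_op_lin _ _ _ _ _ _)
             (fun n => eq_refl)) in H.
  rewrite !wdot_expand in H by auto.
  rewrite (dot_trans_op_sym (P u) u), (wdot_sym _ u (P u)) in H by auto.
  replace (dot (P u) u + c * dot (P u) (P u) + c * dot (P u) (P u) + c * c * dot (P (P u)) (P u))
    with (dot (P u) u + 2 * c * dot (P u) (P u) + c * c * dot (P (P u)) (P u)) in H by ring.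
  replace (dot u u + c * dot (P u) u + c * dot (P u) u + c * c * dot (P u) (P u))
    with (dot u u + 2 * c * dot (P u) u + c * c * dot (P u) (P u)) in H by ring.
  exact H.
Qed.

Lemma norm_trans_iter_perp_eig (t : nat) (u : nat -> R) : perp_eig u ->
  dot (trans_iter p q r t u) (trans_iter p q r t u) <= beta ^ (2 * t) * dot u u.
Proof.
  intro Hperp. pose proof beta_bounds as [Hb _]. induction t; simpl trans_iter; [simpl; lra|].
  eapply Rle_trans; [apply norm_trans_op_perp_eig, perp_eig_trans_iter, Hperp|].
  replace (2 * S t)%nat with (2 + 2 * t)%nat by lia. rewrite pow_add.
  assert (0 <= beta ^ 2) by (apply pow_le; lra). nra.
Qed.

Definition delta0 (n : nat) : R := if Nat.eqb n 0 then / nu p q 0 else 0.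

Lemma bounded_delta0 : bounded delta0.
Proof.
  exists (Rabs (/ nu p q 0)). intro n. unfold delta0.
  destruct (Nat.eqb n 0); [lra | rewrite Rabs_R0; apply Rabs_pos].
Qed.

Lemma dot_delta0 (v : nat -> R) : bounded v -> dot delta0 v = v 0%nat.
Proof.
  intro Hv. pose proof (nu_pos 0).
  rewrite (wdot_incr_1 _ nu_ge0 ex_nu delta0 v bounded_delta0 Hv).
  rewrite (Series_ext _ (fun _ => 0 * 0)) by (intro; unfold delta0; simpl; ring).
  rewrite Series_scal_l. unfold delta0. simpl. field. lra.
Qed.

(* Detailed balance turns the forward equation for mu_t into the backward equation for
   mu_t / nu. *)
Lemma mu_eq_nu_trans_iter (t n : nat) : mu p q r t n = nu p q n * trans_iter p q r t delta0 n.
Proof.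
  pose proof (nu_pos 0). revert n; induction t; intro n.
  - unfold delta0. destruct n; simpl; [field; lra | ring].
  - set (X := trans_iter p q r t delta0). simpl trans_iter. fold X.
    pose proof (nu_detailed_balance n) as E1. rewrite trans_up in E1.
    destruct n as [|k].
    + rewrite mu_succ_0, IHt. fold X. simpl trans_op.
      transitivity (nu p q 1 * q * X 1%nat); [ring|]. rewrite E1. ring.
    + rewrite mu_succ_S, !IHt. fold X. simpl trans_op.
      transitivity (nu p q k * trans p q r k (S k) * X k + nu p q (S k) * X (S k) * r
                    + nu p q (S (S k)) * q * X (S (S k))); [ring|].
      rewrite <- nu_detailed_balance, E1. ring.
Qed.

Lemma dot_trans_iter_sym (t : nat) (u v : nat -> R) : bounded u -> bounded v ->
  dot (trans_iter p q r t u) v = dot u (trans_iter p q r t v).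
Proof.
  intros Hu. revert v; induction t; intros v Hv; simpl; auto.
  rewrite dot_trans_op_sym, IHt by auto using bounded_trans_iter.
  apply wdot_ext; intro n; auto. apply trans_iter_op_comm.
Qed.

Definition sgn (n : nat) : R := (-1) ^ n.

Lemma bounded_sgn : bounded sgn.
Proof. exists 1. intro n. unfold sgn. rewrite pow_1_abs. lra. Qed.

Local Hint Resolve bounded_sgn : core.

Lemma trans_iter_const (t n : nat) : trans_iter p q r t (fun _ => 1) n = 1.
Proof.
  revert n; induction t; intro n; simpl; auto.
  rewrite (trans_op_ext _ _ _ _ (fun _ => 1) IHt). apply trans_op_const.
Qed.

Lemma trans_iter_alt (t n : nat) : trans_iter p q r t alt n = (- alpha) ^ t * alt n.
Proof.
  revert n; induction t; intro n; simpl; [ring|].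
  rewrite (trans_op_ext _ _ _ _ (fun m => (- alpha) ^ t * alt m) IHt).
  rewrite trans_op_scal, trans_op_alt. ring.
Qed.

Definition c0 : R := dot sgn (fun _ => 1).
Definition c1 : R := dot sgn alt / dot alt alt.

Lemma dot_alt_alt_pos : 0 < dot alt alt.
Proof.
  pose proof (wdot_ge_head _ nu_ge0 ex_nu alt bounded_alt) as H.
  unfold alt at 1 2 in H. simpl in H. pose proof (nu_pos 0). lra.
Qed.

(* Both inner products are values of the generating function of nu, at alpha and alpha^2. *)
Lemma c1_eq : c1 = 2 * constA p q r.
Proof.
  pose proof rho_pos. pose proof alpha_bounds.
  assert (Hsa : dot sgn alt = (1 + alpha / (q - p * alpha)) / rho p q).
  { apply is_series_unique, (is_series_Rext (fun n => nu p q n * alpha ^ n)).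
    - intro n. unfold sgn, alt. rewrite Rmult_assoc, <- Rpow_mult_distr. f_equal. f_equal. ring.
    - apply nu_gen. lra. }
  assert (Haa : dot alt alt = (1 + alpha * alpha / (q - p * (alpha * alpha))) / rho p q).
  { apply is_series_unique, (is_series_Rext (fun n => nu p q n * (alpha * alpha) ^ n)).
    - intro n. unfold alt. rewrite Rmult_assoc, <- Rpow_mult_distr. f_equal. f_equal. ring.
    - apply nu_gen. split; nra. }
  unfold c1. rewrite Hsa, Haa.
  assert (q - p * alpha > 0) by nra.
  assert (q - p * (alpha * alpha) > 0) by nra.
  unfold constA, alpha in *.
  assert (Hr : r = 1 - p - q) by lra. rewrite Hr in *.
  assert (1 - p > q) by lra. assert (q * q > 0) by nra.
  assert (1 - 2 * p > 0) by lra. assert (1 + q - p > 0) by lra.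
  assert (A4 : q * ((1 - p) * (1 - p) - p * q) > 0).
  { apply Rmult_gt_0_compat; [lra|]. nra. }
  assert (A6 : q * ((1 - p) - p) > 0) by (apply Rmult_gt_0_compat; lra).
  field. repeat split; apply Rgt_not_eq; lra.
Qed.

Definition sgn_perp (n : nat) : R := sgn n + (- c0) * 1 + (- c1) * alt n.

Lemma bounded_sgn_perp : bounded sgn_perp.
Proof. unfold sgn_perp. apply bounded_lin; [apply bounded_lin|]; auto. Qed.

Lemma perp_eig_sgn_perp : perp_eig sgn_perp.
Proof.
  pose proof dot_alt_alt_pos.
  assert (Hb : bounded (fun n => sgn n + - c0 * 1)) by (apply bounded_lin; auto).
  split; [apply bounded_sgn_perp | split]; unfold sgn_perp; rewrite !wdotDl by auto.
  - rewrite dot_const_const, (wdot_sym _ alt), dot_const_alt. unfold c0. ring.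
  - rewrite dot_const_alt. unfold c1. field. lra.
Qed.

Lemma trans_iter_sgn_head (t : nat) :
  trans_iter p q r t sgn 0%nat = c0 + c1 * (- alpha) ^ t + trans_iter p q r t sgn_perp 0%nat.
Proof.
  rewrite (trans_iter_ext _ _ _ t sgn (fun n => (sgn_perp n + c0 * 1) + c1 * alt n))
    by (intro n; unfold sgn_perp; ring).
  rewrite !trans_iter_lin, trans_iter_const, trans_iter_alt. unfold alt. simpl. ring.
Qed.

(* Since sgn_perp is the orthogonal projection of sgn off span {1, alt}, its norm is at most
   that of sgn_tail, the element of sgn + span {1, alt} vanishing at 0 and 1. *)
Definition sgn_tail (n : nat) : R :=
  sgn n + (- ((alpha - 1) / (alpha + 1))) * 1 + (- (2 / (1 + alpha))) * alt n.

Lemma bounded_sgn_tail : bounded sgn_tail.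
Proof. unfold sgn_tail. apply bounded_lin; [apply bounded_lin|]; auto. Qed.

Lemma sgn_tail_head : sgn_tail 0 = 0 /\ sgn_tail 1 = 0.
Proof. pose proof alpha_bounds. unfold sgn_tail, sgn, alt. simpl. split; field; lra. Qed.

Lemma sgn_tail_sq_le (n : nat) : sgn_tail n * sgn_tail n <= 4 / ((1 + alpha) * (1 + alpha)).
Proof.
  pose proof alpha_bounds as [Ha0 Ha1].
  set (N := sgn n * (1 + alpha - 2 * alpha ^ n) - (alpha - 1)).
  assert (E : sgn_tail n = N / (1 + alpha)).
  { unfold sgn_tail, N, alt, sgn. replace (- alpha) with (-1 * alpha) by ring.
    rewrite Rpow_mult_distr. field. lra. }
  assert (HN : N * N <= 4).
  { unfold N, sgn. destruct (Nat.Even_or_Odd n) as [[m ->] | [m ->]].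
    - rewrite pow_1_even.
      assert (0 <= alpha ^ (2 * m) <= 1) by (split; [apply pow_le | rewrite <- (pow1 (2 * m)); apply pow_incr]; lra).
      nra.
    - rewrite Nat.add_1_r, pow_1_odd, <- tech_pow_Rmult.
      assert (0 <= alpha ^ (2 * m) <= 1) by (split; [apply pow_le | rewrite <- (pow1 (2 * m)); apply pow_incr]; lra).
      nra. }
  rewrite E. replace (N / (1 + alpha) * (N / (1 + alpha))) with (N * N / ((1 + alpha) * (1 + alpha)))
    by (field; lra).
  apply Rmult_le_compat_r; [apply Rlt_le, Rinv_0_lt_compat; nra | exact HN].
Qed.

Lemma norm_sgn_perp_le_tail : dot sgn_perp sgn_perp <= dot sgn_tail sgn_tail.
Proof.
  pose proof perp_eig_sgn_perp as [Hb [H1 Ha]].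
  set (k := fun n => (c0 - (alpha - 1) / (alpha + 1)) * 1 + (c1 - 2 / (1 + alpha)) * alt n).
  assert (Hk : bounded k) by (apply bounded_lin; auto; apply bounded_const).
  rewrite (wdot_ext _ sgn_tail (fun n => sgn_perp n + 1 * k n) sgn_tail (fun n => sgn_perp n + 1 * k n))
    by (intro n; unfold sgn_tail, sgn_perp, k; ring).
  assert (Horth : dot sgn_perp k = 0).
  { unfold k. rewrite wdotDr, wdotZr, H1, Ha by auto. ring. }
  rewrite wdot_orth_add by auto.
  pose proof (wdot_ge0 _ nu_ge0 ex_nu k Hk). lra.
Qed.

Lemma nu_tail_mass : 1 - nu p q 0 - nu p q 1 = nu p q 0 * (p / (q * (q - p))).
Proof. unfold nu. rewrite rho_eq. simpl. field. repeat split; apply Rgt_not_eq; lra. Qed.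

Lemma norm_sgn_tail : dot sgn_tail sgn_tail <= 4 / ((1 + alpha) * (1 + alpha)) * (1 - nu p q 0 - nu p q 1).
Proof.
  set (K := 4 / ((1 + alpha) * (1 + alpha))).
  destruct sgn_tail_head as [H0 H1].
  assert (Hex2 : forall a : nat -> R, ex_series a -> ex_series (fun k => a (S (S k)))).
  { intros a Ha. do 2 apply (proj1 (ex_series_incr_1 _)) in Ha. exact Ha. }
  assert (Hsplit : forall a : nat -> R, ex_series a ->
            Series a = a 0%nat + a 1%nat + Series (fun k => a (S (S k)))).
  { intros a Ha. rewrite (Series_incr_1 a Ha), (Series_incr_1 (fun k => a (S k)))
      by exact (proj1 (ex_series_incr_1 _) Ha). ring. }
  unfold wdot. rewrite Hsplit by (apply ex_wdot; auto using bounded_sgn_tail).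
  rewrite <- Series_nu, (Hsplit (nu p q) ex_nu), H0, H1.
  replace (nu p q 0 + nu p q 1 + Series (fun k => nu p q (S (S k))) - nu p q 0 - nu p q 1)
    with (Series (fun k => nu p q (S (S k)))) by ring.
  assert (Series (fun k => nu p q (S (S k)) * sgn_tail (S (S k)) * sgn_tail (S (S k)))
          <= Series (fun k => K * nu p q (S (S k)))).
  { apply Series_le; [|apply ex_series_Rscal, (Hex2 _ ex_nu)].
    intro n. pose proof (nu_pos (S (S n))). pose proof (sgn_tail_sq_le (S (S n))) as Hn.
    fold K in Hn. rewrite Rmult_assoc. split; [apply Rmult_le_pos; [lra | apply Rle_0_sqr] | nra]. }
  rewrite Series_scal_l in *. lra.
Qed.

Lemma norm_sgn_perp_le : dot sgn_perp sgn_perp <= 4 * constB p q r ^ 2 * nu p q 0.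
Proof.
  eapply Rle_trans; [apply norm_sgn_perp_le_tail|]. eapply Rle_trans; [apply norm_sgn_tail|].
  rewrite nu_tail_mass. destruct (constB_sq_ge p q r hp hq hr hsum hqp hgap) as [_ HB].
  pose proof (nu_pos 0). pose proof alpha_bounds.
  replace (4 / ((1 + alpha) * (1 + alpha)) * (nu p q 0 * (p / (q * (q - p)))))
    with (4 * nu p q 0 * (p / (q * (q - p) * (1 + alpha) ^ 2)))
    by (field; repeat split; apply Rgt_not_eq; nra).
  replace (4 * constB p q r ^ 2 * nu p q 0) with (4 * nu p q 0 * constB p q r ^ 2) by ring.
  apply Rmult_le_compat_l; [lra | exact HB].
Qed.

Lemma trans_iter_sgn_perp_head_le (t : nat) :
  Rabs (trans_iter p q r t sgn_perp 0%nat) <= 2 * constB p q r * beta ^ t.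
Proof.
  set (X := trans_iter p q r t sgn_perp 0%nat).
  pose proof (wdot_ge_head _ nu_ge0 ex_nu _ (bounded_trans_iter p q r t _ bounded_sgn_perp)) as H1.
  pose proof (norm_trans_iter_perp_eig t _ perp_eig_sgn_perp) as H2.
  pose proof norm_sgn_perp_le as H3. pose proof (nu_pos 0) as Hn.
  destruct (constB_sq_ge p q r hp hq hr hsum hqp hgap) as [HB _].
  pose proof beta_bounds as [Hb _].
  assert (Hbt : 0 <= beta ^ t) by (apply pow_le; lra).
  replace (2 * t)%nat with (t * 2)%nat in H2 by lia. rewrite pow_mult in H2.
  fold X in H1.
  assert (H4 : nu p q 0 * (X * X) <= (beta ^ t) ^ 2 * (4 * constB p q r ^ 2 * nu p q 0)).
  { assert (0 <= (beta ^ t) ^ 2) by apply pow2_ge_0.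
    assert ((beta ^ t) ^ 2 * dot sgn_perp sgn_perp <= (beta ^ t) ^ 2 * (4 * constB p q r ^ 2 * nu p q 0))
      by (apply Rmult_le_compat_l; auto).
    lra. }
  replace ((beta ^ t) ^ 2 * (4 * constB p q r ^ 2 * nu p q 0))
    with (nu p q 0 * ((2 * constB p q r * beta ^ t) * (2 * constB p q r * beta ^ t))) in H4 by ring.
  apply Rmult_le_reg_l in H4; [|exact Hn].
  rewrite <- (Rabs_pos_eq (2 * constB p q r * beta ^ t)) by nra.
  apply Rsqr_le_abs_0. exact H4.
Qed.

(* Test the signed measure nu - mu_t against the alternating function sgn. *)
Lemma two_tv_dist_ge (t : nat) :
  2 * tv_dist (nu p q) (mu p q r t) >= Rabs (c0 - trans_iter p q r t sgn 0%nat).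
Proof.
  set (phi := trans_iter p q r t delta0).
  assert (Hphi : bounded phi) by (apply bounded_trans_iter, bounded_delta0).
  set (u := fun n => 1 + (-1) * phi n).
  assert (Hu : bounded u) by (apply bounded_lin; auto).
  set (a := fun n => nu p q n * u n * sgn n).
  assert (Ea : forall n, Rabs (nu p q n - mu p q r t n) = Rabs (a n)).
  { intro n. unfold a, u. rewrite mu_eq_nu_trans_iter. fold phi.
    rewrite Rabs_mult. unfold sgn. rewrite pow_1_abs, Rmult_1_r. f_equal. ring. }
  unfold tv_dist. rewrite (Series_ext _ _ Ea).
  assert (Hex : ex_series (fun n => Rabs (a n))).
  { apply (ex_series_Rext (fun n => nu p q n * Rabs (u n) * 1)).
    - intro n. unfold a, sgn. rewrite !Rabs_mult, pow_1_abs, (Rabs_pos_eq (nu p q n)); auto.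
    - apply ex_wdot; auto. destruct Hu as [M HM]. exists M. intro n. now rewrite Rabs_Rabsolu. }
  assert (ES : Series a = c0 - trans_iter p q r t sgn 0%nat).
  { change (Series a) with (dot u sgn). unfold u. rewrite wdotDl by auto.
    rewrite (wdot_sym _ (fun _ => 1) sgn). fold c0. unfold phi.
    rewrite dot_trans_iter_sym, dot_delta0 by auto using bounded_delta0, bounded_trans_iter. ring. }
  pose proof (Series_Rabs a Hex) as HS. rewrite ES in HS. lra.
Qed.

Lemma tv_dist_lower_bound (t : nat) :
  tv_dist (nu p q) (mu p q r t) >=
    constA p q r * (q / (q + r)) ^ t - constB p q r * (r + 2 * sqrt (p * q)) ^ t.
Proof.
  pose proof (two_tv_dist_ge t) as Htv.
  rewrite trans_iter_sgn_head in Htv.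
  replace (c0 - (c0 + c1 * (- alpha) ^ t + trans_iter p q r t sgn_perp 0%nat))
    with (- (c1 * (- alpha) ^ t) - trans_iter p q r t sgn_perp 0%nat) in Htv by ring.
  pose proof (Rabs_triang_inv (- (c1 * (- alpha) ^ t)) (trans_iter p q r t sgn_perp 0%nat)) as HT.
  pose proof (trans_iter_sgn_perp_head_le t) as HB.
  assert (HA : Rabs (- (c1 * (- alpha) ^ t)) >= 2 * constA p q r * alpha ^ t).
  { rewrite Rabs_Ropp, Rabs_mult, <- RPow_abs, Rabs_Ropp, c1_eq.
    pose proof alpha_bounds. rewrite (Rabs_pos_eq alpha) by lra.
    assert (0 <= alpha ^ t) by (apply pow_le; lra).
    pose proof (Rle_abs (2 * constA p q r)). nra. }
  unfold alpha, beta in *. lra.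
Qed.

End Chain.

Theorem mainTheorem2 (p q r : R)
  (hp : 0 < p) (hq : 0 < q) (hr : 0 < r) (hsum : p + q + r = 1) (hqp : p < q)
  (hgap : q / (q + r) > r + 2 * sqrt (p * q)) :
  exists T : nat, forall t : nat, (T <= t)%nat ->
    tv_dist (nu p q) (mu p q r t) >=
      constA p q r * (q / (q + r)) ^ t - constB p q r * (r + 2 * sqrt (p * q)) ^ t.
Proof.
  exists 0%nat. intros t _. now apply tv_dist_lower_bound.
Qed.
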